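(* Let $R$ and $S$ be commutative rings with identity, $f:R\to S$ a ring homomorphism, and $J$ a nonzero proper ideal of $S$. Let $\mathfrak{p}$ and $\{\mathfrak{p}_\alpha\}_{\alpha\in\Lambda}$ be prime ideals of $R$, and $\mathfrak{q}$ and $\{\mathfrak{q}_\alpha\}_{\alpha\in\Lambda}$ be prime ideals of $S$ not containing $J$. Then: (1) $\mathfrak{p}^{\prime_f}\subseteq\bigcup_{\alpha\in\Lambda}\mathfrak{p}_\alpha^{\prime_f}$ if and only if $\mathfrak{p}\subseteq\bigcup_{\alpha\in\Lambda}\mathfrak{p}_\alpha$. (2) If $\mathfrak{q}\subseteq\bigcup_{\alpha\in\Lambda}\mathfrak{q}_\alpha$, then $\overline{\mathfrak{q}}^f\subseteq\bigcup_{\alpha\in\Lambda}\overline{\mathfrak{q}_\alpha}^f$. The converse holds if either $f$ is surjective or $\operatorname{Spec}(S)\setminus V(J)$ is compactly packed. (3) $\bigcup_{\alpha\in\Lambda}\mathfrak{p}_\alpha^{\prime_f}\subseteq\mathfrak{p}^{\prime_f}$ if and only if $\bigcup_{\alpha\in\Lambda}\mathfrak{p}_\alpha\subseteq\mathfrak{p}$; and $\bigcup_{\alpha\in\Lambda}\overline{\mathfrak{q}_\alpha}^f\subseteq\overline{\mathfrak{q}}^f$ if and only if $\bigcup_{\alpha\in\Lambda}\mathfrak{q}_\alpha\subseteq\mathfrak{q}$ (with no additional assumptions). (4) $\overline{\mathfrak{q}}^f\subseteq\bigcup_{\alpha\in\Lambda}\mathfrak{p}_\alpha^{\prime_f}$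 if and only if $f^{-1}(\mathfrak{q}+J)\subseteq\bigcup_{\alpha\in\Lambda}\mathfrak{p}_\alpha$. (5) If $\operatorname{Spec}(S)\setminus V(J)$ is compactly packed, then $\mathfrak{p}^{\prime_f}\not\subseteq\bigcup_{\alpha\in\Lambda}\overline{\mathfrak{q}_\alpha}^f$.
   Context: $R\bowtie^f J:=\{(r,f(r)+j)\mid r\in R,\ j\in J\}$, a subring of $R\times S$. For a prime ideal $\mathfrak{p}$ of $R$, $\mathfrak{p}^{\prime_f}:=\{(p,f(p)+j)\mid p\in\mathfrak{p},\ j\in J\}$; for a prime ideal $\mathfrak{q}$ of $S$ with $J\not\subseteq\mathfrak{q}$, $\overline{\mathfrak{q}}^f:=\{(r,f(r)+j)\mid r\in R,\ j\in J,\ f(r)+j\in\mathfrak{q}\}$; both are prime ideals of $R\bowtie^f J$. $V(J)$ is the set of prime ideals of $S$ containing $J$. A subset $X\subseteq\operatorname{Spec}(S)$ is compactly packed if whenever an ideal $I$ of $S$ is contained in the union of a family $\{\mathfrak{q}_i\}_i$ of elements of $X$, then $I\subseteq\mathfrak{q}_i$ for some $i$. *)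

From HB Require Import structures.
From mathcomp Require Import all_boot all_algebra.
Set Implicit Arguments. Unset Strict Implicit. Unset Printing Implicit Defensive.
Import GRing.Theory.
Local Open Scope ring_scope.

Definition psubset {T : Type} (A B : T -> Prop) : Prop := forall x, A x -> B x.

Definition bigunion {T L : Type} (F : L -> T -> Prop) : T -> Prop :=
  fun x => exists a : L, F a x.

Definition is_ideal {R : comNzRingType} (I : R -> Prop) : Prop :=
  I 0 /\ (forall x y, I x -> I y -> I (x - y)) /\ (forall r x, I x -> I (r * x)).

Definition is_prime_ideal {R : comNzRingType} (P : R -> Prop) : Prop :=
  is_ideal P /\ ~ P 1 /\ (forall a b, P (a * b) -> P a \/ P b).

Definition amalg {R S : comNzRingType} (f : {rmorphism R -> S}) (J : S -> Prop)
  : R * S -> Prop :=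
  fun x => exists r j, J j /\ x = (r, f r + j).

Definition prime_f {R S : comNzRingType} (f : {rmorphism R -> S}) (J : S -> Prop)
  (p : R -> Prop) : R * S -> Prop :=
  fun x => exists a j, p a /\ J j /\ x = (a, f a + j).

Definition bar_f {R S : comNzRingType} (f : {rmorphism R -> S}) (J : S -> Prop)
  (q : S -> Prop) : R * S -> Prop :=
  fun x => exists r j, J j /\ q (f r + j) /\ x = (r, f r + j).

Definition ideal_sum {S : comNzRingType} (A B : S -> Prop) : S -> Prop :=
  fun s => exists a b, A a /\ B b /\ s = a + b.

Definition ppreim {R S : Type} (f : R -> S) (A : S -> Prop) : R -> Prop :=
  fun r => A (f r).

Definition spec_minus_V {S : comNzRingType} (J : S -> Prop) (q : S -> Prop) : Prop :=
  is_prime_ideal q /\ ~ psubset J q.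

Definition compactly_packed {S : comNzRingType} (X : (S -> Prop) -> Prop) : Prop :=
  forall (I : S -> Prop), is_ideal I ->
  forall (L : Type) (qs : L -> S -> Prop), (forall i, X (qs i)) ->
    psubset I (bigunion qs) -> exists i, psubset I (qs i).

Definition fsurjective {R S : Type} (f : R -> S) : Prop := forall s, exists r, f r = s.

From HB Require Import structures.
From mathcomp Require Import all_boot all_algebra.
From Stdlib Require Import Classical.
Set Implicit Arguments. Unset Strict Implicit. Unset Printing Implicit Defensive.
Import GRing.Theory.
Local Open Scope ring_scope.

(* Every element of [prime_f f J P] or [bar_f f J Q] has the shape
   (r, f r + j) with j in J, and such a pair determines r and j.  Hence both
   constructions commute with unions, [prime_f] reflects inclusions, and an
   inclusion of [bar_f]'s only sees [Q ∩ (f(R) + J)].  The remaining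
   ingredient is the prime-ideal fact that [I ∩ J ⊆ P] and [J ⊄ P] force
   [I ⊆ P], since [I J ⊆ I ∩ J]; compact packing of Spec(S) \ V(J) turns an
   inclusion in a union into an inclusion in one member. *)

Lemma psubset_eqr (T : Type) (A B B' : T -> Prop) :
  (forall x, B x <-> B' x) -> psubset A B <-> psubset A B'.
Proof. by move=> eqB; split=> AB x /AB /eqB. Qed.

Lemma bigunion_psubset (T L : Type) (F : L -> T -> Prop) (B : T -> Prop) :
  psubset (bigunion F) B <-> forall a, psubset (F a) B.
Proof. by split=> [FB a x Fx | FB x [a /FB]] //; apply: FB; exists a. Qed.

Section Ideals.

Variable S : comNzRingType.
Implicit Types I J P : S -> Prop.

Lemma ideal0 I : is_ideal I -> I 0.
Proof. by case. Qed.

Lemma idealN I x : is_ideal I -> I x -> I (- x).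
Proof. by move=> [I0 [IB _]] /(IB _ _ I0); rewrite add0r. Qed.

Lemma idealMl I r x : is_ideal I -> I x -> I (r * x).
Proof. by move=> [_ [_ IM]]; apply: IM. Qed.

Lemma ideal_meet I J : is_ideal I -> is_ideal J -> is_ideal (fun s => I s /\ J s).
Proof.
move=> [I0 [IB IM]] [J0 [JB JM]]; split=> //.
by split=> [x y [Ix Jx] [Iy Jy] | r x [Ix Jx]]; split; auto.
Qed.

Lemma psubset_prime_of_meet P I J :
  is_prime_ideal P -> is_ideal I -> is_ideal J -> ~ psubset J P ->
  psubset (fun s => I s /\ J s) P -> psubset I P.
Proof.
move=> [_ [_ Pprime]] idI idJ JnP IJP x Ix.
have [j [Jj Pnj]] : exists j, J j /\ ~ P j.
  by apply: NNPP => noj; apply: JnP => j Jj; apply: NNPP => Pnj; apply: noj; exists j.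
have /Pprime [//|//] : P (j * x).
by apply: IJP; split; [apply: idealMl | rewrite mulrC; apply: idealMl].
Qed.

Lemma compactly_packed_meet_psubset L J I (qs : L -> S -> Prop) :
  compactly_packed (spec_minus_V J) -> is_ideal J -> is_ideal I ->
  (forall a, spec_minus_V J (qs a)) ->
  psubset (fun s => I s /\ J s) (bigunion qs) -> psubset I (bigunion qs).
Proof.
move=> cpJ idJ idI qsJ IJqs.
have [a IJqa] := cpJ _ (ideal_meet idI idJ) L qs qsJ IJqs.
have [qa_prime qaJ] := qsJ a.
by move=> x /(psubset_prime_of_meet qa_prime idI idJ qaJ IJqa) qax; exists a.
Qed.

End Ideals.

Section Amalgamation.

Variables (R S : comNzRingType) (f : {rmorphism R -> S}) (J : S -> Prop).
Implicit Types (P : R -> Prop) (Q : S -> Prop).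

Lemma mem_prime_f P r j : prime_f f J P (r, f r + j) <-> P r /\ J j.
Proof.
split=> [[a [j' [Pa [Jj' [ra]]]]] | [Pr Jj]]; last by exists r, j.
by move: Pa Jj'; rewrite -ra => Pr Jj' /addrI ->.
Qed.

Lemma mem_bar_f Q r j : bar_f f J Q (r, f r + j) <-> J j /\ Q (f r + j).
Proof.
split=> [[r' [j' [Jj' [Qs [rr']]]]] | [Jj Qs]]; last by exists r, j.
by move: Jj' Qs; rewrite -rr' => Jj' Qs /addrI ->.
Qed.

Lemma prime_f_bigunion L (ps : L -> R -> Prop) x :
  bigunion (fun a => prime_f f J (ps a)) x <-> prime_f f J (bigunion ps) x.
Proof.
split=> [[a [r [j [psr [Jj ->]]]]] | [r [j [[a psr] [Jj ->]]]]].
  by exists r, j; split=> //; exists a.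
by exists a, r, j.
Qed.

Lemma bar_f_bigunion L (qs : L -> S -> Prop) x :
  bigunion (fun a => bar_f f J (qs a)) x <-> bar_f f J (bigunion qs) x.
Proof.
split=> [[a [r [j [Jj [qs_s ->]]]]] | [r [j [Jj [[a qs_s] ->]]]]].
  by exists r, j; do 2!split=> //; exists a.
by exists a, r, j.
Qed.

Lemma prime_f_psubset P P' :
  J 0 -> psubset (prime_f f J P) (prime_f f J P') <-> psubset P P'.
Proof.
move=> J0; split=> [PP' r Pr | PP' _ [r [j [Pr [Jj ->]]]]].
  have /PP' /mem_prime_f [] // : prime_f f J P (r, f r + 0) by apply/mem_prime_f.
by apply/mem_prime_f; split; first apply: PP'.
Qed.

Lemma bar_f_psubset Q Q' :
  psubset (bar_f f J Q) (bar_f f J Q') <->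
  forall r j, J j -> Q (f r + j) -> Q' (f r + j).
Proof.
split=> [QQ' r j Jj Qs | QQ' _ [r [j [Jj [Qs ->]]]]].
  by have /QQ' /mem_bar_f [] : bar_f f J Q (r, f r + j) by apply/mem_bar_f.
by apply/mem_bar_f; split; last apply: QQ'.
Qed.

Lemma bar_f_monotone Q Q' : psubset Q Q' -> psubset (bar_f f J Q) (bar_f f J Q').
Proof. by move=> QQ'; apply/bar_f_psubset => r j _ /QQ'. Qed.

Lemma bar_f_psubset_meet Q Q' :
  psubset (bar_f f J Q) (bar_f f J Q') -> psubset (fun s => Q s /\ J s) Q'.
Proof.
by move/bar_f_psubset=> QQ' s [Qs Js]; move: (QQ' 0 s Js); rewrite rmorph0 add0r; apply.
Qed.

Lemma bar_f_psubset_surj Q Q' : J 0 -> fsurjective f ->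
  psubset (bar_f f J Q) (bar_f f J Q') -> psubset Q Q'.
Proof.
move=> J0 f_surj /bar_f_psubset QQ' s; have [r <-] := f_surj s.
by rewrite -(addr0 (f r)); apply: QQ'.
Qed.

Lemma bar_f_psubset_prime Q Q' :
  is_ideal J -> is_ideal Q -> is_prime_ideal Q' -> ~ psubset J Q' ->
  psubset (bar_f f J Q) (bar_f f J Q') <-> psubset Q Q'.
Proof.
move=> idJ idQ Q'prime JnQ'; split; last exact: bar_f_monotone.
by move/bar_f_psubset_meet; apply: psubset_prime_of_meet.
Qed.

Lemma bar_f_psubset_prime_f Q P : is_ideal J ->
  psubset (bar_f f J Q) (prime_f f J P) <-> psubset (ppreim f (ideal_sum Q J)) P.
Proof.
move=> idJ; split=> [QP r [s [j [Qs [Jj fr]]]] | QP _ [r [j [Jj [Qs ->]]]]].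
  have : bar_f f J Q (r, f r + - j).
    by apply/mem_bar_f; split; [apply: idealN | rewrite fr addrK].
  by move/QP/mem_prime_f=> [].
apply/mem_prime_f; split=> //; apply: QP.
by exists (f r + j), (- j); do 2?split; [| apply: idealN | rewrite addrK].
Qed.

Lemma prime_f_psubset_bar_f P Q :
  P 0 -> psubset (prime_f f J P) (bar_f f J Q) -> psubset J Q.
Proof.
move=> P0 PQ s Js.
have /PQ /mem_bar_f [_] : prime_f f J P (0, f 0 + s) by apply/mem_prime_f.
by rewrite rmorph0 add0r.
Qed.

End Amalgamation.

Theorem lemma2p2 (R S : comNzRingType) (f : {rmorphism R -> S}) (J : S -> Prop)
  (hJ : is_ideal J) (hJ0 : exists j, J j /\ j <> 0) (hJ1 : ~ J 1)
  (Lam : Type)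
  (p : R -> Prop) (ps : Lam -> R -> Prop)
  (hp : is_prime_ideal p) (hps : forall a, is_prime_ideal (ps a))
  (q : S -> Prop) (qs : Lam -> S -> Prop)
  (hq : is_prime_ideal q) (hqJ : ~ psubset J q)
  (hqs : forall a, is_prime_ideal (qs a)) (hqsJ : forall a, ~ psubset J (qs a)) :
  (* (1) *)
  (psubset (prime_f f J p) (bigunion (fun a => prime_f f J (ps a)))
     <-> psubset p (bigunion ps)) /\
  (* (2) *)
  (psubset q (bigunion qs) ->
     psubset (bar_f f J q) (bigunion (fun a => bar_f f J (qs a)))) /\
  ((fsurjective f \/ compactly_packed (spec_minus_V J)) ->
     psubset (bar_f f J q) (bigunion (fun a => bar_f f J (qs a))) ->
     psubset q (bigunion qs)) /\
  (* (3) *)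
  (psubset (bigunion (fun a => prime_f f J (ps a))) (prime_f f J p)
     <-> psubset (bigunion ps) p) /\
  (psubset (bigunion (fun a => bar_f f J (qs a))) (bar_f f J q)
     <-> psubset (bigunion qs) q) /\
  (* (4) *)
  (psubset (bar_f f J q) (bigunion (fun a => prime_f f J (ps a)))
     <-> psubset (ppreim f (ideal_sum q J)) (bigunion ps)) /\
  (* (5) *)
  (compactly_packed (spec_minus_V J) ->
     ~ psubset (prime_f f J p) (bigunion (fun a => bar_f f J (qs a)))).
Proof.
have J0 := ideal0 hJ.
have qsV a : spec_minus_V J (qs a) := conj (hqs a) (hqsJ a).
have unionP A := psubset_eqr A (prime_f_bigunion f J ps).
have unionQ A := psubset_eqr A (bar_f_bigunion f J qs).
split; first exact: iff_trans (unionP _) (prime_f_psubset f _ _ J0).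
split; first by move/(bar_f_monotone (f:=f) (J:=J))/unionQ.
split.
  move=> [f_surj | cpJ] /unionQ sub; first exact: bar_f_psubset_surj J0 f_surj sub.
  exact: compactly_packed_meet_psubset cpJ hJ hq.1 qsV (bar_f_psubset_meet sub).
split.
  have subP a := prime_f_psubset f (ps a) p J0.
  by split=> /bigunion_psubset sub; apply/bigunion_psubset => a;
    [apply/(subP a).1 | apply/(subP a).2].
split.
  have subQ a := bar_f_psubset_prime f hJ (hqs a).1 hq hqJ.
  by split=> /bigunion_psubset sub; apply/bigunion_psubset => a;
    [apply/(subQ a).1 | apply/(subQ a).2].
split; first exact: iff_trans (unionP _) (bar_f_psubset_prime_f f _ _ hJ).
move=> cpJ /unionQ /(prime_f_psubset_bar_f (ideal0 hp.1)) Jqs.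
have [a Jqa] := cpJ J hJ Lam qs qsV Jqs.
exact: hqsJ a Jqa.
Qed.
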